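(* Let $k\ge1$ be odd, $\omega=\frac{1+\sqrt{-7}}{2}$, and with $S=\begin{psmallmatrix}0&-1\\1&0\end{psmallmatrix}$, $T=\begin{psmallmatrix}1&1\\0&1\end{psmallmatrix}$, $T_\omega=\begin{psmallmatrix}1&\omega\\0&1\end{psmallmatrix}$, $U=TS$, let $W_{k,k}=\ker(\mathbf{1}+S)\cap\ker(\mathbf{1}+U+U^2)\cap\ker(T+ST_\omega+T_\omega ST+ST_\omega^{-1}ST_\omega)$. Let $\varepsilon=\begin{psmallmatrix}-1&0\\0&1\end{psmallmatrix}$, so $P|\varepsilon=P(-z,-\bar z)$. Then $W_{k,k}|\varepsilon=W_{k,k}$, and hence $W_{k,k}=W_{k,k}^1\oplus W_{k,k}^{-1}$, where $W_{k,k}^{\pm1}=W_{k,k}\cap\{P\in V_{k,k}:P(-z,-\bar z)=\pm P(z,\bar z)\}$.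
   Context: $V_{k,k}$: polynomials $\sum_{0\le i,j\le k}c_{ij}z^i\bar z^j$ over $\mathbb{C}$ with right action $(P|\gamma)(z,\bar z)=(cz+e)^k\overline{(cz+e)}^kP\!\left(\frac{az+b}{cz+e},\frac{\bar a\bar z+\bar b}{\bar c\bar z+\bar e}\right)$ for $\gamma=\begin{psmallmatrix}a&b\\c&e\end{psmallmatrix}$, extended linearly; $\ker(X)=\{P:P|X=0\}$; $W|\varepsilon=\{P|\varepsilon:P\in W\}$. *)

(* Complex numbers are modelled by algC (algebraic complex numbers),
   which contain all the constants involved (omega = (1 + sqrt(-7))/2). *)
From HB Require Import structures.
From mathcomp Require Import all_boot all_order all_algebra.
From mathcomp Require Import algC.
Set Implicit Arguments. Unset Strict Implicit. Unset Printing Implicit Defensive.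
Import Order.TTheory GRing.Theory Num.Theory.
Local Open Scope ring_scope.

(* Bivariate polynomials in z and zbar: outer variable is z, inner variable is w = zbar.
   The monomial z^i zbar^j is ('X^j)%:P * 'X^i, with coefficient (P`_i)`_j. *)
Notation bipoly := {poly {poly algC}}.

Definition inV (k : nat) (P : bipoly) : Prop :=
  leq (size P) k.+1 /\ forall i, leq (size P`_i) k.+1.

Definition linZ (a b : algC) : bipoly := a%:P%:P * 'X + b%:P%:P.
Definition linW (a b : algC) : bipoly := (a *: 'X + b%:P)%:P.

(* The right action of gamma = [[a,b],[c,e]] on V_{k,k}:
   (P|gamma)(z,zbar) = (cz+e)^k (conj(c) zbar + conj(e))^k P((az+b)/(cz+e), conj(...)),
   which for P = sum c_ij z^i zbar^j is, as a polynomial identity,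
   sum c_ij (az+b)^i (cz+e)^(k-i) (conj a zbar + conj b)^j (conj c zbar + conj e)^(k-j). *)
Definition slash (k : nat) (g : 'M[algC]_2) (P : bipoly) : bipoly :=
  let a := g ord0 ord0 in let b := g ord0 ord_max in
  let c := g ord_max ord0 in let e := g ord_max ord_max in
  \sum_(i < k.+1) \sum_(j < k.+1)
     ((P`_i)`_j)%:P%:P *
       (linZ a b ^+ i * linZ c e ^+ (k - i) *
        linW (a^*) (b^*) ^+ j * linW (c^*) (e^*) ^+ (k - j)).

(* linear extension: X = sum of the matrices in gs (group-ring element) *)
Definition slashX (k : nat) (gs : seq 'M[algC]_2) (P : bipoly) : bipoly :=
  \sum_(g <- gs) slash k g P.

Definition inker (k : nat) (gs : seq 'M[algC]_2) (P : bipoly) : Prop :=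
  inV k P /\ slashX k gs P = 0.

Definition mx2 (a b c e : algC) : 'M[algC]_2 :=
  \matrix_(i < 2, j < 2)
    if i == ord0 then (if j == ord0 then a else b) else (if j == ord0 then c else e).

Definition omega : algC := (1 + sqrtC (-7)) / 2.
Definition Sm : 'M[algC]_2 := mx2 0 (-1) 1 0.
Definition Tm : 'M[algC]_2 := mx2 1 1 0 1.
Definition Tw : 'M[algC]_2 := mx2 1 omega 0 1.
Definition Twinv : 'M[algC]_2 := mx2 1 (- omega) 0 1.
Definition Um : 'M[algC]_2 := Tm *m Sm.
Definition Id2 : 'M[algC]_2 := 1%:M.
Definition epsm : 'M[algC]_2 := mx2 (-1) 0 0 1.

Definition Wkk (k : nat) (P : bipoly) : Prop :=
  inker k [:: Id2; Sm] P /\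
  inker k [:: Id2; Um; Um *m Um] P /\
  inker k [:: Tm; Sm *m Tw; Tw *m Sm *m Tm; Sm *m Twinv *m Sm *m Tw] P.

(* P(-z, -zbar) *)
Definition negzw (P : bipoly) : bipoly := (map_poly (comp_poly (- 'X)) P) \Po (- 'X).

Definition Wkk_sign (k : nat) (s : algC) (P : bipoly) : Prop :=
  Wkk k P /\ negzw P = s%:P%:P * P.

From HB Require Import structures.
From mathcomp Require Import all_boot all_order all_algebra.
From mathcomp Require Import algC.
From mathcomp Require Import ring zify.
Set Implicit Arguments. Unset Strict Implicit. Unset Printing Implicit Defensive.
Import Order.TTheory GRing.Theory Num.Theory.
Local Open Scope ring_scope.

(* The slash operator is a right action of GL_2 in which -1 acts trivially.
   Indeed, P|g is the bihomogenization of P (of bidegree (k,k)) evaluated at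
   the linear forms given by the rows of g and of conj(g); bihomogenization is
   multiplicative on polynomials of bounded bidegree, and evaluating it on the
   forms of g at the forms of h produces the forms of gh, so P|g|h = P|gh;
   replacing g by -g multiplies by (-1)^(2k) = 1.
   For each of the three group-ring elements X = sum g defining W_{k,k} there
   are b and a permutation g' of the terms such that eps g = +-S g' b.  Since
   P|S = -P on ker(1 + S), this gives P|eps|X = -(P|X)|b = 0.  Finally eps is
   an involution and P|eps = P(-z,-zbar), so P = (P + P|eps)/2 + (P - P|eps)/2
   splits W_{k,k} into the two eigenspaces. *)

(** * Bidegree *)

Definition bideg_le (m n : nat) (P : bipoly) : bool :=
  (size P <= m.+1)%N && (sizeY P <= n.+1)%N.

Lemma inV_bideg_le k P : inV k P <-> bideg_le k k P.
Proof.
split=> [[szP szPi] | /andP[szP szPY]].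
  by rewrite /bideg_le szP; apply/bigmax_leqP => i _.
by split=> // i; apply: leq_trans (max_size_coefXY P i) szPY.
Qed.

Lemma bideg_le_coef m n P i j :
  bideg_le m n P -> (m < i)%N || (n < j)%N -> P`_i`_j = 0.
Proof.
case/andP=> szP szPY /orP[lt_mi | lt_nj]; first by rewrite (leq_sizeP _ _ szP i lt_mi) coef0.
exact: leq_sizeP _ _ (leq_trans (max_size_coefXY P i) szPY) j lt_nj.
Qed.

Lemma bideg_leD m n P Q :
  bideg_le m n P -> bideg_le m n Q -> bideg_le m n (P + Q).
Proof.
case/andP=> szP szPY /andP[szQ szQY]; apply/andP; split.
  by rewrite (leq_trans (size_polyD _ _)) // geq_max szP.
by rewrite sizeYE raddfD (leq_trans (size_polyD _ _)) // geq_max -!sizeYE szPY.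
Qed.

Lemma bideg_leM m n m' n' P Q : bideg_le m n P -> bideg_le m' n' Q ->
  bideg_le (m + m') (n + n') (P * Q).
Proof.
have size_mul_le (A B : bipoly) a b : (size A <= a.+1)%N -> (size B <= b.+1)%N ->
    (size (A * B)%R <= (a + b).+1)%N.
  move=> szA szB; apply: leq_trans (size_polyMleq A B) _.
  by rewrite -subn1 leq_subLR add1n -addnS -addSn leq_add.
case/andP=> szP szPY /andP[szQ szQY]; apply/andP; split; first exact: size_mul_le.
by rewrite sizeYE rmorphM; apply: size_mul_le; rewrite -sizeYE.
Qed.

Lemma bideg_leC m n (c : algC) : bideg_le m n c%:P%:P.
Proof.
rewrite /bideg_le sizeYE swapXY_polyC size_map_polyC.
by rewrite !(leq_trans (size_polyC_leq1 _)).
Qed.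

Lemma bideg_leX_z p L : bideg_le 1 0 L -> bideg_le p 0 (L ^+ p).
Proof.
move=> degL; elim: p => [|p IHp]; first by rewrite expr0 bideg_leC.
by rewrite exprS; exact: (bideg_leM degL IHp).
Qed.

Lemma bideg_leX_w p M : bideg_le 0 1 M -> bideg_le 0 p (M ^+ p).
Proof.
move=> degM; elim: p => [|p IHp]; first by rewrite expr0 bideg_leC.
by rewrite exprS; exact: (bideg_leM degM IHp).
Qed.

Lemma bideg_le_sum m n I (r : seq I) (F : I -> bipoly) :
  (forall x, bideg_le m n (F x)) -> bideg_le m n (\sum_(x <- r) F x).
Proof.
move=> degF; apply: (big_ind (bideg_le m n)) => //; last exact: bideg_leD.
by have := bideg_leC m n 0; rewrite !rmorph0.
Qed.

Lemma bideg_le_lincomb m n c d P Q : bideg_le m n P -> bideg_le m n Q ->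
  bideg_le m n (c%:P%:P * P + d%:P%:P * Q).
Proof.
move=> degP degQ.
exact: bideg_leD (bideg_leM (bideg_leC 0 0 c) degP) (bideg_leM (bideg_leC 0 0 d) degQ).
Qed.

Lemma bideg_le_X : bideg_le 1 0 'X.
Proof. by rewrite /bideg_le sizeYE swapXY_X size_polyX size_polyC leq_b1. Qed.

Lemma bideg_le_linZ a b : bideg_le 1 0 (linZ a b).
Proof. exact: bideg_leD (bideg_leM (bideg_leC 0 0 a) bideg_le_X) (bideg_leC 1 0 b). Qed.

Lemma bideg_le_linW a b : bideg_le 0 1 (linW a b).
Proof.
rewrite /bideg_le sizeYE swapXY_polyC size_map_polyC size_polyC.
rewrite (leq_trans (leq_b1 _)) //= (leq_trans (size_polyD _ _)) // geq_max.
by rewrite size_polyC (leq_trans (size_scale_leq _ _)) ?size_polyX ?(leq_trans (leq_b1 _)).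
Qed.

Lemma sum_ord_delta (R : pzSemiRingType) n a (F : nat -> R) :
  \sum_(i < n) F i * (i == a :> nat)%:R = F a * (a < n)%:R.
Proof.
rewrite (eq_bigr (fun i : 'I_n => F a * (i == a :> nat)%:R)) => [|i _]; last first.
  by case: eqP => [->|]; rewrite ?mulr0.
rewrite -mulr_sumr -natr_sum; congr (_ * _%:R).
by rewrite -big_mkcond (@big_ord1_eq nat 0 addn (fun=> 1%N)); case: ltnP.
Qed.

Lemma coef_monomial i j a b :
  ('Y ^+ j * 'X ^+ i : bipoly)`_a`_b = ((a == i) && (b == j))%:R.
Proof.
rewrite -rmorphXn coefMXn /=.
case: ltngtP => [lt_ai|lt_ia|->]; rewrite ?coef0 //.
  by rewrite coefC (_ : (a - i == 0)%N = false) ?coef0 //; lia.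
by rewrite subnn coefC coefXn.
Qed.

Lemma bipoly_expand m n P : bideg_le m n P ->
  P = \sum_(i < m.+1) \sum_(j < n.+1) (P`_i`_j)%:P%:P * ('Y ^+ j * 'X ^+ i).
Proof.
move=> degP; apply/polyP=> a; apply/polyP=> b; rewrite !coef_sum.
under eq_bigr => i _.
  rewrite !coef_sum; under eq_bigr => j _ do
    rewrite !coefCM coef_monomial (eq_sym a) (eq_sym b) -mulnb natrM mulrA mulrAC.
  rewrite -mulr_suml (sum_ord_delta _ _ (fun j => P`_i`_j)); over.
rewrite (sum_ord_delta _ _ (fun i => P`_i`_b * (b < n.+1)%:R)) -mulrA -natrM mulnb !ltnS.
have [_ | out] := boolP ((b <= n) && (a <= m))%N; first by rewrite mulr1.
by rewrite mulr0 (bideg_le_coef degP) // orbC !ltnNge -negb_and.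
Qed.

(** * Bihomogenization *)

Section Homogenization.
Variables z1 z2 w1 w2 : bipoly.

Definition hmono m n i j := z1 ^+ i * z2 ^+ (m - i) * w1 ^+ j * w2 ^+ (n - j).

(* [homog m n P] is z2^m w2^n P(z1/z2, w1/w2), written without division. *)
Definition homog m n (P : bipoly) : bipoly :=
  \sum_(i < m.+1) \sum_(j < n.+1) (P`_i`_j)%:P%:P * hmono m n i j.

Lemma homog_is_zmod_morphism m n : zmod_morphism (homog m n).
Proof.
move=> P Q; rewrite /homog -sumrB; apply: eq_bigr => i _.
by rewrite -sumrB; apply: eq_bigr => j _; rewrite !coefB !rmorphB mulrBl.
Qed.

HB.instance Definition _ m n :=
  GRing.isZmodMorphism.Build bipoly bipoly (homog m n) (homog_is_zmod_morphism m n).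

Lemma homogZ m n c P : homog m n (c%:P%:P * P) = c%:P%:P * homog m n P.
Proof.
rewrite /homog mulr_sumr; apply: eq_bigr => i _; rewrite mulr_sumr.
by apply: eq_bigr => j _; rewrite !coefCM !rmorphM mulrA.
Qed.

Lemma homog_monomial m n i j : (i <= m)%N -> (j <= n)%N ->
  homog m n ('Y ^+ j * 'X ^+ i) = hmono m n i j.
Proof.
move=> le_im le_jn; rewrite /homog.
under eq_bigr => i' _.
  under eq_bigr => j' _ do
    rewrite coef_monomial -mulnb !rmorph_nat natrM mulrC mulrA mulrAC.
  rewrite -mulr_suml (sum_ord_delta _ _ (fun j' => hmono m n i' j')); over.
by rewrite (sum_ord_delta _ _ (fun i' => hmono m n i' j * _)) !ltnS le_im le_jn !mulr1.
Qed.

Lemma hmonoD m n m' n' i j i' j' :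
  (i <= m)%N -> (j <= n)%N -> (i' <= m')%N -> (j' <= n')%N ->
  hmono (m + m') (n + n') (i + i') (j + j') = hmono m n i j * hmono m' n' i' j'.
Proof.
move=> le_im le_jn le_im' le_jn'; rewrite /hmono.
have -> : (m + m' - (i + i') = (m - i) + (m' - i'))%N by lia.
have -> : (n + n' - (j + j') = (n - j) + (n' - j'))%N by lia.
rewrite !exprD; ring.
Qed.

Lemma homogM m n m' n' P Q : bideg_le m n P -> bideg_le m' n' Q ->
  homog (m + m') (n + n') (P * Q) = homog m n P * homog m' n' Q.
Proof.
move=> degP degQ.
rewrite [in LHS](bipoly_expand degP) [in LHS](bipoly_expand degQ) [in RHS]/homog.
rewrite mulr_suml raddf_sum /= mulr_suml; apply: eq_bigr => i _.
rewrite mulr_suml raddf_sum /= mulr_suml; apply: eq_bigr => j _.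
rewrite mulr_sumr raddf_sum /= mulr_sumr; apply: eq_bigr => i' _.
rewrite mulr_sumr raddf_sum /= mulr_sumr; apply: eq_bigr => j' _.
rewrite mulrACA -!polyCM homogZ mulrACA -(exprD 'Y) -(exprD 'X).
have le_im : (i <= m)%N := ltn_ord i. have le_jn : (j <= n)%N := ltn_ord j.
have le_im' : (i' <= m')%N := ltn_ord i'. have le_jn' : (j' <= n')%N := ltn_ord j'.
rewrite homog_monomial ?leq_add // hmonoD // [RHS]mulrACA.
by rewrite -!polyCM.
Qed.

Lemma homogM_zw m n P Q : bideg_le m 0 P -> bideg_le 0 n Q ->
  homog m n (P * Q) = homog m 0 P * homog 0 n Q.
Proof. by move=> degP degQ; have := homogM degP degQ; rewrite addn0. Qed.

Lemma homog1 : homog 0 0 1 = 1.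
Proof. by rewrite /homog !big_ord1 /hmono !coef1 /= !expr0 !mulr1 !rmorph1. Qed.

Lemma homogX_z p L : bideg_le 1 0 L -> homog p 0 (L ^+ p) = homog 1 0 L ^+ p.
Proof.
move=> degL; elim: p => [|p IHp]; first by rewrite !expr0 homog1.
by rewrite !exprS -IHp (homogM degL) // bideg_leX_z.
Qed.

Lemma homogX_w p M : bideg_le 0 1 M -> homog 0 p (M ^+ p) = homog 0 1 M ^+ p.
Proof.
move=> degM; elim: p => [|p IHp]; first by rewrite !expr0 homog1.
by rewrite !exprS -IHp (homogM degM) // bideg_leX_w.
Qed.

End Homogenization.

Section HomogOfHmono.
Variables (z1 z2 w1 w2 L1 L2 M1 M2 : bipoly).
Hypotheses (degL1 : bideg_le 1 0 L1) (degL2 : bideg_le 1 0 L2).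
Hypotheses (degM1 : bideg_le 0 1 M1) (degM2 : bideg_le 0 1 M2).
Local Notation H := (homog z1 z2 w1 w2).

Let degZ i i' : bideg_le (i + i') 0 (L1 ^+ i * L2 ^+ i').
Proof. exact: bideg_leM (bideg_leX_z i degL1) (bideg_leX_z i' degL2). Qed.

Let degW j j' : bideg_le 0 (j + j') (M1 ^+ j * M2 ^+ j').
Proof. exact: bideg_leM (bideg_leX_w j degM1) (bideg_leX_w j' degM2). Qed.

Lemma bideg_le_hmono m n i j : (i <= m)%N -> (j <= n)%N ->
  bideg_le m n (hmono L1 L2 M1 M2 m n i j).
Proof.
move=> le_im le_jn; rewrite /hmono -mulrA.
move: (m - i)%N (n - j)%N (subnKC le_im) (subnKC le_jn) => i' j' <- <-.
by have := bideg_leM (degZ i i') (degW j j'); rewrite addn0.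
Qed.

Lemma homog_hmono m n i j : (i <= m)%N -> (j <= n)%N ->
  H m n (hmono L1 L2 M1 M2 m n i j) = hmono (H 1 0 L1) (H 1 0 L2) (H 0 1 M1) (H 0 1 M2) m n i j.
Proof.
move=> le_im le_jn; rewrite /hmono -[_ * M2 ^+ _]mulrA -[_ * H 0 1 M2 ^+ _]mulrA.
move: (m - i)%N (n - j)%N (subnKC le_im) (subnKC le_jn) => i' j' <- <-.
rewrite homogM_zw // -!homogX_z // -!homogX_w //; congr (_ * _).
  exact: (homogM _ _ _ _ (bideg_leX_z i degL1) (bideg_leX_z i' degL2)).
exact: (homogM _ _ _ _ (bideg_leX_w j degM1) (bideg_leX_w j' degM2)).
Qed.

End HomogOfHmono.

Lemma hmonoN (z1 z2 w1 w2 : bipoly) m n i j : (i <= m)%N -> (j <= n)%N ->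
  hmono (- z1) (- z2) (- w1) (- w2) m n i j = (-1) ^+ (m + n) * hmono z1 z2 w1 w2 m n i j.
Proof.
move=> le_im le_jn.
have -> : (-1) ^+ (m + n) = (-1) ^+ i * (-1) ^+ (m - i) * ((-1) ^+ j * (-1) ^+ (n - j)) :> bipoly.
  by rewrite -(exprD _ j) -(exprD _ i) !subnKC // exprD.
rewrite /hmono (exprNn z1) (exprNn z2) (exprNn w1) (exprNn w2); ring.
Qed.

Lemma homogN (z1 z2 w1 w2 : bipoly) m n P :
  homog (- z1) (- z2) (- w1) (- w2) m n P = (-1) ^+ (m + n) * homog z1 z2 w1 w2 m n P.
Proof.
rewrite /homog mulr_sumr; apply: eq_bigr => i _; rewrite mulr_sumr; apply: eq_bigr => j _.
by rewrite (@hmonoN _ _ _ _ m n i j (ltn_ord i) (ltn_ord j)) mulrCA.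
Qed.

Lemma homog_XY m n P : bideg_le m n P -> homog 'X 1 'Y 1 m n P = P.
Proof.
move=> degP; rewrite [RHS](bipoly_expand degP); apply: eq_bigr => i _.
by apply: eq_bigr => j _; rewrite /hmono !expr1n !mulr1 (mulrC 'X^i).
Qed.

Lemma rmorph_homog (f : {rmorphism bipoly -> bipoly}) z1 z2 w1 w2 m n P :
  (forall c, f c%:P%:P = c%:P%:P) ->
  f (homog z1 z2 w1 w2 m n P) = homog (f z1) (f z2) (f w1) (f w2) m n P.
Proof.
move=> fC; rewrite /homog rmorph_sum; apply: eq_bigr => i _.
rewrite rmorph_sum; apply: eq_bigr => j _.
by rewrite rmorphM fC /hmono !rmorphM !rmorphXn.
Qed.

Lemma homog_linZ z1 z2 w1 w2 a b :
  homog z1 z2 w1 w2 1 0 (linZ a b) = a%:P%:P * z1 + b%:P%:P * z2.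
Proof.
rewrite /homog /hmono !big_ord_recl !big_ord0 /= /linZ !coefD !coefCM !coefX !coefC /=.
by rewrite /bump /= !mulr0 !add0r !mulr1 !addr0 !expr0 !expr1 !mul1r ?mulr1 addrC.
Qed.

Lemma homog_linW z1 z2 w1 w2 a b :
  homog z1 z2 w1 w2 0 1 (linW a b) = a%:P%:P * w1 + b%:P%:P * w2.
Proof.
rewrite /homog /hmono !big_ord_recl !big_ord0 /= /linW !coefC /=.
rewrite !coefD !coefZ !coefX !coefC /=.
by rewrite /bump /= ?mulr0 ?add0r ?mulr1 ?addr0 ?expr0 ?expr1 ?mul1r ?mulr1 addrC.
Qed.

(** * The slash action *)

Definition zform (g : 'M[algC]_2) r := linZ (g r ord0) (g r ord_max).
Definition wform (g : 'M[algC]_2) r := linW (g r ord0)^* (g r ord_max)^*.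

Lemma slashE k g P : slash k g P =
  homog (zform g ord0) (zform g ord_max) (wform g ord0) (wform g ord_max) k k P.
Proof. by []. Qed.

HB.instance Definition _ k g :=
  GRing.isZmodMorphism.Build bipoly bipoly (slash k g)
    (homog_is_zmod_morphism (zform g ord0) (zform g ord_max) (wform g ord0) (wform g ord_max) k k).

Lemma slashZ k g c P : slash k g (c%:P%:P * P) = c%:P%:P * slash k g P.
Proof. exact: homogZ. Qed.

Lemma bideg_le_slash k g P : bideg_le k k (slash k g P).
Proof.
rewrite slashE /homog; apply: bideg_le_sum => i; apply: bideg_le_sum => j.
apply: (bideg_leM (bideg_leC 0 0 _)); apply: bideg_le_hmono;
  by [apply: bideg_le_linZ | apply: bideg_le_linW | rewrite -ltnS].
Qed.

Lemma mulmx2E (g h : 'M[algC]_2) r c :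
  (g *m h) r c = g r ord0 * h ord0 c + g r ord_max * h ord_max c.
Proof.
rewrite mxE !big_ord_recl big_ord0 addr0; congr (_ + _ * _).
- by congr (g r _); apply: val_inj.
- by congr (h _ c); apply: val_inj.
Qed.

Section Composition.
Variables g h : 'M[algC]_2.
Local Notation Hh := (homog (zform h ord0) (zform h ord_max) (wform h ord0) (wform h ord_max)).

Lemma homog_zform r : Hh 1 0 (zform g r) = zform (g *m h) r.
Proof. by rewrite homog_linZ /zform /linZ !mulmx2E !rmorphD /= !rmorphM /=; ring. Qed.

Lemma homog_wform r : Hh 0 1 (wform g r) = wform (g *m h) r.
Proof.
rewrite homog_linW /wform /linW !mulmx2E -!polyCM -polyCD; congr _%:P.
by rewrite -!mul_polyC !rmorphD !rmorphM /=; ring.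
Qed.

Lemma slash_comp k P : slash k h (slash k g P) = slash k (g *m h) P.
Proof.
rewrite [slash k g P]slashE [slash k (g *m h) P]slashE /homog raddf_sum /=.
apply: eq_bigr => i _; rewrite raddf_sum /=; apply: eq_bigr => j _.
rewrite slashZ slashE homog_hmono ?homog_zform ?homog_wform //;
  by [apply: bideg_le_linZ | apply: bideg_le_linW | rewrite -ltnS].
Qed.

End Composition.

Lemma slash_oppmx k g P : slash k (- g) P = slash k g P.
Proof.
have zformN r : zform (- g) r = - zform g r.
  by rewrite /zform /linZ !mxE !rmorphN /= mulNr opprD.
have wformN r : wform (- g) r = - wform g r.
  by rewrite /wform /linW !mxE !rmorphN /= scaleNr -opprD rmorphN.
rewrite !slashE !zformN !wformN homogN.
have -> : (-1) ^+ (k + k) = 1 :> bipoly by rewrite -signr_odd oddD addbb.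
exact: mul1r.
Qed.

Definition eq_upto_sign (g h : 'M[algC]_2) := (g == h) || (g == - h).

Lemma slash_eq_upto_sign k g h P : eq_upto_sign g h -> slash k g P = slash k h P.
Proof. by case/orP=> /eqP ->; rewrite ?slash_oppmx. Qed.

Lemma slash_id k P : bideg_le k k P -> slash k Id2 P = P.
Proof.
move=> degP; rewrite slashE /zform /wform /Id2 !mxE /= /linZ /linW.
rewrite !rmorph0 !rmorph1 mul1r mul0r scale1r scale0r !addr0 !add0r rmorph1.
exact: homog_XY.
Qed.

Lemma negzw_slash k P : bideg_le k k P -> negzw P = slash k epsm P.
Proof.
move=> degP; rewrite -{1}(homog_XY degP) /negzw.
rewrite (rmorph_homog (f := map_poly (comp_poly (- 'X)))) => [|c]; last first.
  by rewrite /= map_polyC; congr _%:P; exact: comp_polyC.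
rewrite (rmorph_homog (f := comp_poly (- 'X))) => [|c]; last exact: comp_polyC.
rewrite slashE /zform /wform /epsm /mx2 !mxE /= /linZ /linW.
rewrite !rmorphN1 !rmorph0 !rmorph1 scaleN1r scale0r add0r addr0 mulN1r mul0r add0r.
by rewrite map_polyX comp_polyX map_polyC /= comp_polyX comp_polyC addr0 rmorph1.
Qed.

Lemma mx2_mul a b c e a' b' c' e' :
  mx2 a b c e *m mx2 a' b' c' e' =
  mx2 (a * a' + b * c') (a * b' + b * e') (c * a' + e * c') (c * b' + e * e').
Proof.
apply/matrixP => i j; rewrite mulmx2E !mxE.
by case: i => [[|[|?]] ?] //; case: j => [[|[|?]] ?].
Qed.

Lemma Id2E : Id2 = mx2 1 0 0 1.
Proof.
apply/matrixP => i j; rewrite !mxE.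
by case: i => [[|[|?]] ?] //; case: j => [[|[|?]] ?].
Qed.

Lemma slash_epsK k P : bideg_le k k P -> slash k epsm (slash k epsm P) = P.
Proof.
move=> degP; have epsK : epsm *m epsm = Id2 by rewrite Id2E mx2_mul; congr mx2; ring.
by rewrite slash_comp epsK slash_id.
Qed.

(** * Invariance of W_{k,k} under epsilon *)

Lemma slashX_slash k gs gs' g0 a b lam P :
  slash k a P = lam%:P%:P * P -> perm_eq gs gs' ->
  all2 (fun g g' => eq_upto_sign (g0 *m g) (a *m g' *m b)) gs gs' ->
  slashX k gs (slash k g0 P) = lam%:P%:P * slash k b (slashX k gs P).
Proof.
move=> aP perm_gs; rewrite /slashX [in RHS](perm_big _ perm_gs) raddf_sum mulr_sumr /=.
elim: gs gs' {perm_gs} => [|g gs IH] [|g' gs'] //=; first by rewrite !big_nil.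
case/andP=> rel_g rel_gs; rewrite !big_cons (IH gs' rel_gs); congr (_ + _).
by rewrite slash_comp (slash_eq_upto_sign _ _ rel_g) -slash_comp -(slash_comp a g') aP !slashZ.
Qed.

Lemma inker_slash k gs gs' g0 a b lam P :
  inker k gs P -> slash k a P = lam%:P%:P * P -> perm_eq gs gs' ->
  all2 (fun g g' => eq_upto_sign (g0 *m g) (a *m g' *m b)) gs gs' ->
  inker k gs (slash k g0 P).
Proof.
move=> [_ XP] aP perm_gs rel_gs; split; first exact/inV_bideg_le/bideg_le_slash.
by rewrite (slashX_slash aP perm_gs rel_gs) XP raddf0 mulr0.
Qed.

Lemma inker_lincomb k gs c d P Q : inker k gs P -> inker k gs Q ->
  inker k gs (c%:P%:P * P + d%:P%:P * Q).
Proof.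
move=> [/inV_bideg_le degP XP] [/inV_bideg_le degQ XQ].
split; first exact/inV_bideg_le/bideg_le_lincomb.
move: XP XQ; rewrite /slashX => XP XQ.
under eq_bigr do rewrite raddfD /= !slashZ.
by rewrite big_split -!mulr_sumr XP XQ !mulr0; apply: addr0.
Qed.

Lemma Wkk_lincomb k c d P Q : Wkk k P -> Wkk k Q -> Wkk k (c%:P%:P * P + d%:P%:P * Q).
Proof.
by move=> [S1 [U1 T1]] [S2 [U2 T2]]; split; [|split]; apply: inker_lincomb.
Qed.

Lemma bideg_le_Wkk k P : Wkk k P -> bideg_le k k P.
Proof. by case=> [[/inV_bideg_le]]. Qed.

Lemma eq_upto_sign_mx2 a b c e a' b' c' e' :
  [/\ a = a', b = b', c = c' & e = e'] \/ [/\ a = - a', b = - b', c = - c' & e = - e'] ->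
  eq_upto_sign (mx2 a b c e) (mx2 a' b' c' e').
Proof.
case=> [[-> -> -> ->] | [-> -> -> ->]]; apply/orP; [left | right]; apply/eqP => //.
by apply/matrixP => i j; rewrite !mxE; case: ifP; case: ifP.
Qed.

Ltac mx2_upto_sign :=
  rewrite /Sm /Um /Tm /Tw /Twinv /epsm ?Id2E !mx2_mul; apply: eq_upto_sign_mx2;
  first [left; split; ring | right; split; ring].

Lemma slashS_inker k P : inker k [:: Id2; Sm] P -> slash k Sm P = - P.
Proof.
case=> /inV_bideg_le degP; rewrite /slashX !big_cons big_nil addr0 slash_id //.
by move/eqP; rewrite addrC addr_eq0 => /eqP.
Qed.

Lemma Wkk_slash_eps k P : Wkk k P -> Wkk k (slash k epsm P).
Proof.
move=> [kerS [kerU kerT]]; have SP : slash k Sm P = (-1)%:P%:P * P.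
  by rewrite slashS_inker // !rmorphN1 mulN1r.
split; [|split].
- apply: (inker_slash (gs' := [:: Id2; Sm]) (b := Sm *m epsm) kerS SP) => //=.
  by rewrite andbT; apply/andP; split; mx2_upto_sign.
- apply: (inker_slash (gs' := [:: Id2; Um *m Um; Um]) (b := Sm *m epsm) kerU SP).
    by rewrite perm_cons (perm_catC [:: Um]).
  by rewrite /= andbT; apply/and3P; split; mx2_upto_sign.
- (* The identities eps g = +-S g' b below hold for every value of omega. *)
  apply: (inker_slash (gs' := [:: Sm *m Tw; Tm; Sm *m Twinv *m Sm *m Tw; Tw *m Sm *m Tm])
                      (b := mx2 1 (-1 - omega) 0 1 *m epsm) kerT SP).
    exact: perm_cat (permEl (perm_catC [:: Tm] [:: Sm *m Tw]))
                    (permEl (perm_catC [:: Tw *m Sm *m Tm] [:: Sm *m Twinv *m Sm *m Tw])).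
  by rewrite /= andbT; apply/and4P; split; mx2_upto_sign.
Qed.

Definition eps_proj k s P := 2^-1%:P%:P * P + (2^-1 * s)%:P%:P * slash k epsm P.

Lemma Wkk_sign_eps_proj k s P : s * s = 1 -> Wkk k P -> Wkk_sign k s (eps_proj k s P).
Proof.
move=> ss WP; have degP := bideg_le_Wkk WP.
have W : Wkk k (eps_proj k s P) by apply: Wkk_lincomb WP (Wkk_slash_eps WP).
split=> //; rewrite (negzw_slash (bideg_le_Wkk W)) raddfD /= !slashZ slash_epsK //.
rewrite mulrDr addrC !mulrA -!polyCM.
by rewrite (mulrC s) (mulrCA s) ss mulr1.
Qed.

Lemma eps_proj_sum k P : eps_proj k 1 P + eps_proj k (-1) P = P.
Proof.
have half : 2^-1 + 2^-1 = 1 :> algC by field.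
rewrite addrACA -!mulrDl -!rmorphD /= -mulrDr addrN mulr0 !rmorph0 mul0r addr0.
by rewrite half !rmorph1 mul1r.
Qed.

Theorem proposition5p14 (k : nat) (hk : odd k) :
  (forall Q : bipoly, Wkk k Q <-> exists2 P : bipoly, Wkk k P & Q = slash k epsm P) /\
  ((forall P : bipoly, Wkk k P ->
      exists P1 Pm : bipoly, [/\ Wkk_sign k 1 P1, Wkk_sign k (-1) Pm & P = P1 + Pm]) /\
   (forall P : bipoly, Wkk_sign k 1 P -> Wkk_sign k (-1) P -> P = 0)).
Proof.
split.
  move=> Q; split=> [WQ | [P WP ->]]; last exact: Wkk_slash_eps.
  exists (slash k epsm Q); first exact: Wkk_slash_eps.
  by rewrite slash_epsK // bideg_le_Wkk.
split=> [P WP | P [_ evenP] [_ oddP]].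
  exists (eps_proj k 1 P), (eps_proj k (-1) P); split; last by rewrite eps_proj_sum.
    exact: Wkk_sign_eps_proj (mulr1 1) WP.
  by apply: Wkk_sign_eps_proj WP; rewrite mulrNN mulr1.
have PN : P = - P by move: oddP; rewrite evenP !rmorph1 !rmorphN1 mul1r mulN1r.
have : P *+ 2 = 0 by rewrite mulr2n {1}PN addNr.
by move/eqP; rewrite -mulr_natl mulf_eq0 -(rmorph_nat (polyC \o polyC)) !polyC_eq0 pnatr_eq0 => /eqP.
Qed.
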